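(* Under the assumptions $\alpha=2$, the far-destination approximation (all relay–destination distances replaced by $d$), and conditioned on $N\ge 1$, the energy harvesting decode-and-forward protocol with a uniformly randomly chosen relay achieves diversity gain $2$: $$-\lim_{P\to\infty}\frac{\log \mathcal{P}_1(P)}{\log P}=2,\qquad \mathcal{P}_1(P)=\mathcal{P}\big(x_0+\eta y_i(x_i-\epsilon)<\epsilon,\ x_i>\epsilon\big)+\mathcal{P}\big(x_0<\epsilon,\ x_i<\epsilon\big).$$
   Context: Source at origin, destination at distance $d>0$; relays form a homogeneous Poisson point process of intensity $\lambda$ in the disc $\mathcal D$ of radius $R_{\mathcal D}$ centred at the source; the chosen relay is uniform in $\mathcal D$ at distance $d_i$ from the source. Fading $h_d,h_i,g_i$ independent $\mathcal{CN}(0,1)$; $x_0=|h_d|^2/(1+d^2)$, $x_i=|h_i|^2/(1+d_i^2)$, $y_i=|g_i|^2/(1+d^2)$. $\tau=2^{2R}-1$ for target rate $R>0$, $\epsilon=\tau/P$ with transmit power $P$, $\eta\in(0,1]$. Relay decodes iff $x_i>\epsilon$, transmits with power $\eta(Px_i-\tau)$; outage when the combined SNR $P(x_0+\eta y_i(x_i-\epsilon))<\tau$. *)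

From Stdlib Require Import Reals ClassicalEpsilon.
Open Scope R_scope.

Definition is_RInt (f : R -> R) (a b v : R) : Prop :=
  exists pr : Riemann_integrable f a b, RiemannInt pr = v.

(* total integral operator (value is meaningful when f is integrable) *)
Definition RInt (f : R -> R) (a b : R) : R :=
  epsilon (inhabits 0) (fun v => is_RInt f a b v).

Definition is_RInt_0_inf (f : R -> R) (v : R) : Prop :=
  (forall T, 0 <= T -> exists w, is_RInt f 0 T w) /\
  (forall e, 0 < e -> exists M, forall T, M <= T -> Rabs (RInt f 0 T - v) < e).

Definition RInt_0_inf (f : R -> R) : R :=
  epsilon (inhabits 0) (fun v => is_RInt_0_inf f v).

Definition ind_lt (u w : R) : R := if Rlt_dec u w then 1 else 0.

(* Randomness: relay distance r has density 2r/RD^2 on [0,RD];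
   given r, x_i ~ Exp(rate 1+r^2); x_0, y_i ~ Exp(rate 1+d^2); all independent
   (since |h|^2 ~ Exp(1) for h ~ CN(0,1)).
   eps = tau / P.
   P_1 = P(x0 + eta*yi*(xi - eps) < eps, xi > eps) + P(x0 < eps, xi < eps). *)
Definition P1 (d RD eta tau P : R) : R :=
  let eps := tau / P in
  let a := 1 + d ^ 2 in
  RInt (fun r =>
     (2 * r / RD ^ 2) *
     (let b := 1 + r ^ 2 in
        RInt_0_inf (fun x => b * exp (- b * x) *
          RInt_0_inf (fun y => a * exp (- a * y) *
            RInt_0_inf (fun z => a * exp (- a * z) *
               (ind_lt eps x * ind_lt (z + eta * y * (x - eps)) eps))))
      + RInt_0_inf (fun x => b * exp (- b * x) *
            RInt_0_inf (fun z => a * exp (- a * z) *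
               (ind_lt x eps * ind_lt z eps)))))
   0 RD.

(* The direct-link term of [P1] is exactly [(1 - exp (- a eps)) (1 - exp (- b eps))], where
   [a = 1 + d^2] and [b = 1 + r^2] are the exponential rates, hence at least [a eps^2 / 4]: this
   gives [P1 >= c P^-2].  In the relayed term, decoding ([x_i > eps]) followed by outage forces
   [x_0 < eps] and [y_i < eps / (eta (x_i - eps))], so given [x_i = x] its probability is at most
   [a eps min (1, a eps / (eta (x - eps)))]; integrating this against the density of [x_i] costs
   only a factor [eps ln (1 / eps)].  Hence [c P^-2 <= P1 <= C P^-2 ln P], which forces
   [ln P1 / ln P -> -2].  The integrands are only piecewise monotone; they are Riemann
   integrable because their oscillation is controlled by a monotone function, which lets one
   squeeze them between step functions. *)

From Pilot Require Import Defs.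
From Stdlib Require Import Reals Lra Psatz ClassicalEpsilon FunctionalExtensionality.
From Coquelicot Require Import Coquelicot.
Open Scope R_scope.

Definition bracket (f : R -> R) (a b gap : R) : Prop :=
  exists g h : R -> R, ex_RInt g a b /\ ex_RInt h a b /\
    (forall t, a <= t <= b -> g t <= f t <= h t) /\ RInt h a b - RInt g a b <= gap.

Lemma ex_RInt_squeeze (f : R -> R) (a b : R) : a < b ->
  (forall e, 0 < e -> bracket f a b e) -> ex_RInt f a b.
Proof.
  intros Hab Hbr.
  assert (Hsign : sign (b - a) = 1) by (apply sign_eq_1; lra).
  assert (Hmin : Rmin a b = a) by (apply Rmin_left; lra).
  assert (Hmax : Rmax a b = b) by (apply Rmax_right; lra).
  destruct (proj1 (filterlim_locally_cauchy (F := Riemann_fine a b)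
              (fun ptd => scal (sign (b - a)) (Riemann_sum f ptd)))) as [y Hy];
    [|exists y; exact Hy].
  intros [e He]. simpl.
  destruct (Hbr (e / 3)) as [g [h [Hg [Hh [Hgfh Hgap]]]]]; [lra|].
  assert (He3 : 0 < e / 3) by lra.
  pose proof (proj1 (filterlim_locally _ _) (RInt_correct g a b Hg) (mkposreal _ He3)) as Sg.
  pose proof (proj1 (filterlim_locally _ _) (RInt_correct h a b Hh) (mkposreal _ He3)) as Sh.
  simpl in Sg, Sh.
  set (fine := fun ptd : SF_seq => pointed_subdiv ptd /\ SF_h ptd = Rmin a b /\
                 seq.last (SF_h ptd) (SF_lx ptd) = Rmax a b).
  exists (fun ptd => fine ptd
    /\ ball (RInt g a b) (e / 3) (scal (sign (b - a)) (Riemann_sum g ptd))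
    /\ ball (RInt h a b) (e / 3) (scal (sign (b - a)) (Riemann_sum h ptd))).
  split.
  { apply filter_and; [|apply filter_and; assumption].
    unfold Riemann_fine, within. apply filter_forall. auto. }
  assert (Hsandwich : forall ptd, fine ptd ->
    Riemann_sum g ptd <= Riemann_sum f ptd <= Riemann_sum h ptd).
  { intros ptd [Hptd [Hh0 Hlast]]. rewrite Hmin in Hh0. rewrite Hmax in Hlast.
    split; apply Riemann_sum_le; auto; intros t Ht; rewrite Hlast, Hh0 in Ht; apply Hgfh; lra. }
  intros u v [Fu [Gu Hu]] [Fv [Gv Hv]].
  destruct (Hsandwich u Fu). destruct (Hsandwich v Fv).
  rewrite Hsign in *.
  change (Rabs (1 * Riemann_sum f v - 1 * Riemann_sum f u) < e).
  change (Rabs (1 * Riemann_sum g u - RInt g a b) < e / 3) in Gu.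
  change (Rabs (1 * Riemann_sum g v - RInt g a b) < e / 3) in Gv.
  change (Rabs (1 * Riemann_sum h u - RInt h a b) < e / 3) in Hu.
  change (Rabs (1 * Riemann_sum h v - RInt h a b) < e / 3) in Hv.
  apply Rabs_def1; apply Rabs_def2 in Gu, Gv, Hu, Hv; lra.
Qed.

Lemma ex_RInt_ext_open (f g : R -> R) a b : a <= b ->
  (forall x, a < x < b -> f x = g x) -> ex_RInt f a b -> ex_RInt g a b.
Proof.
  intros Hab H. apply ex_RInt_ext. intros x Hx.
  rewrite Rmin_left, Rmax_right in Hx by lra. auto.
Qed.

Lemma RInt_ext_open (f g : R -> R) a b : a <= b ->
  (forall x, a < x < b -> f x = g x) -> RInt f a b = RInt g a b.
Proof.
  intros Hab H. apply RInt_ext. intros x Hx.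
  rewrite Rmin_left, Rmax_right in Hx by lra. auto.
Qed.

Lemma RInt_Chasles_R (f : R -> R) a b c : ex_RInt f a b -> ex_RInt f b c ->
  RInt f a c = RInt f a b + RInt f b c.
Proof. intros. rewrite <- (RInt_Chasles f a b c); auto. Qed.

Lemma RInt_cst (c a b : R) : RInt (fun _ => c) a b = (b - a) * c.
Proof. rewrite RInt_const. reflexivity. Qed.

Lemma RInt_scal_R (f : R -> R) a b k : ex_RInt f a b ->
  RInt (fun x => k * f x) a b = k * RInt f a b.
Proof. apply (RInt_scal f a b k). Qed.

Lemma ex_RInt_scal_R (f : R -> R) a b k : ex_RInt f a b -> ex_RInt (fun x => k * f x) a b.
Proof. apply (ex_RInt_scal f a b k). Qed.

Definition glue (c : R) (f g : R -> R) (t : R) : R := if Rlt_dec t c then f t else g t.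

Lemma glue_ex_RInt_RInt (f g : R -> R) a c b : a <= c <= b ->
  ex_RInt f a c -> ex_RInt g c b ->
  ex_RInt (glue c f g) a b /\ RInt (glue c f g) a b = RInt f a c + RInt g c b.
Proof.
  intros Hc Hf Hg.
  assert (Eleft : forall x, a < x < c -> f x = glue c f g x).
  { intros x Hx. unfold glue. destruct (Rlt_dec x c); [auto | lra]. }
  assert (Eright : forall x, c < x < b -> g x = glue c f g x).
  { intros x Hx. unfold glue. destruct (Rlt_dec x c); [lra | auto]. }
  assert (Hl : ex_RInt (glue c f g) a c) by (apply (ex_RInt_ext_open f); tauto).
  assert (Hr : ex_RInt (glue c f g) c b) by (apply (ex_RInt_ext_open g); tauto).
  split; [apply ex_RInt_Chasles with c; auto|].
  rewrite (RInt_Chasles_R _ a c b Hl Hr).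
  rewrite (RInt_ext_open f (glue c f g) a c), (RInt_ext_open g (glue c f g) c b); tauto.
Qed.

Lemma bracket_Chasles (f : R -> R) a c b gap1 gap2 : a <= c <= b ->
  bracket f a c gap1 -> bracket f c b gap2 -> bracket f a b (gap1 + gap2).
Proof.
  intros Hc [g1 [h1 [Hg1 [Hh1 [Hf1 Hgap1]]]]] [g2 [h2 [Hg2 [Hh2 [Hf2 Hgap2]]]]].
  destruct (glue_ex_RInt_RInt g1 g2 a c b Hc Hg1 Hg2) as [Hg Eg].
  destruct (glue_ex_RInt_RInt h1 h2 a c b Hc Hh1 Hh2) as [Hh Eh].
  exists (glue c g1 g2), (glue c h1 h2). do 2 (split; [assumption|]). split.
  - intros t Ht. unfold glue. destruct (Rlt_dec t c); [apply Hf1 | apply Hf2]; lra.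
  - rewrite Eg, Eh. lra.
Qed.

Definition osc_dominated (f W : R -> R) (a b : R) : Prop :=
  forall u v, a <= u -> u <= v -> v <= b ->
    exists lo hi, (forall t, u <= t <= v -> lo <= f t <= hi) /\ hi - lo <= W v - W u.

Lemma osc_dominated_bracket (f W : R -> R) a b : a <= b -> osc_dominated f W a b ->
  bracket f a b ((b - a) * (W b - W a)).
Proof.
  intros Hab Hosc. destruct (Hosc a b) as [lo [hi [Hf Hgap]]]; try lra.
  exists (fun _ => lo), (fun _ => hi).
  do 2 (split; [apply ex_RInt_const|]). split; [exact Hf|].
  rewrite !RInt_cst. nra.
Qed.

Lemma osc_dominated_bracket_uniform (f W : R -> R) (n : nat) a b : a <= b ->
  osc_dominated f W a b -> bracket f a b ((b - a) * (W b - W a) / (INR n + 1)).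
Proof.
  revert a. induction n as [|n IH]; intros a Hab Hosc.
  - simpl. replace ((b - a) * (W b - W a) / (0 + 1)) with ((b - a) * (W b - W a)) by field.
    apply osc_dominated_bracket; assumption.
  - assert (Hn : 0 < INR n + 1) by (pose proof (pos_INR n); lra).
    set (c := a + (b - a) / (INR n + 2)).
    assert (Hc : a <= c <= b).
    { unfold c. split.
      - assert (0 <= (b - a) / (INR n + 2)) by (apply Rdiv_le_0_compat; lra). lra.
      - assert ((b - a) / (INR n + 2) <= b - a); [|lra].
        apply Rmult_le_reg_r with (INR n + 2); [lra|]. field_simplify; nra. }
    assert (Hleft := osc_dominated_bracket f W a c (proj1 Hc)
                       (fun u v Hu Huv Hv => Hosc u v Hu Huv ltac:(lra))).
    assert (Hright := IH c (proj2 Hc) (fun u v Hu Huv Hv => Hosc u v ltac:(lra) Huv Hv)).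
    assert (Hsplit := bracket_Chasles f a c b _ _ Hc Hleft Hright).
    replace ((b - a) * (W b - W a) / (INR (S n) + 1))
      with ((c - a) * (W c - W a) + (b - c) * (W b - W c) / (INR n + 1));
      [exact Hsplit|].
    rewrite S_INR. unfold c. field. lra.
Qed.

Lemma ex_RInt_osc_dominated (f W : R -> R) a b : a <= b -> osc_dominated f W a b ->
  ex_RInt f a b.
Proof.
  intros Hab Hosc. destruct (Req_dec a b) as [<-|Hne]; [apply ex_RInt_point|].
  apply ex_RInt_squeeze; [lra|]. intros e He.
  assert (HW : 0 <= W b - W a).
  { destruct (Hosc a b) as [lo [hi [Hf Hgap]]]; try lra. specialize (Hf a). lra. }
  destruct (INR_unbounded ((b - a) * (W b - W a) / e)) as [n Hn].
  destruct (osc_dominated_bracket_uniform f W n a b Hab Hosc) as [g [h [Hg [Hh [Hf Hgap]]]]].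
  exists g, h. do 3 (split; [assumption|]).
  eapply Rle_trans; [exact Hgap|].
  apply Rmult_le_reg_r with (INR n + 1); [pose proof (pos_INR n); lra|].
  unfold Rdiv in *. rewrite Rmult_assoc, Rinv_l, Rmult_1_r by (pose proof (pos_INR n); lra).
  apply Rmult_lt_compat_r with (r := e) in Hn; [|lra].
  rewrite Rmult_assoc, Rinv_l, Rmult_1_r in Hn by lra. nra.
Qed.

Lemma ex_RInt_decr (f : R -> R) a b : a <= b ->
  (forall u v, a <= u -> u <= v -> v <= b -> f v <= f u) -> ex_RInt f a b.
Proof.
  intros Hab Hf. apply (ex_RInt_osc_dominated f (fun t => - f t)); auto.
  intros u v Hu Huv Hv. exists (f v), (f u). split; [|lra].
  intros t Ht. split; apply Hf; lra.
Qed.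

Lemma ex_RInt_incr (f : R -> R) a b : a <= b ->
  (forall u v, a <= u -> u <= v -> v <= b -> f u <= f v) -> ex_RInt f a b.
Proof.
  intros Hab Hf. apply (ex_RInt_osc_dominated f f); auto.
  intros u v Hu Huv Hv. exists (f u), (f v). split; [|lra].
  intros t Ht. split; apply Hf; lra.
Qed.

Lemma ex_RInt_mult_incr_decr (p q : R -> R) a b P Q : a <= b ->
  (forall u v, a <= u -> u <= v -> v <= b -> p u <= p v) ->
  (forall u v, a <= u -> u <= v -> v <= b -> q v <= q u) ->
  (forall t, a <= t <= b -> 0 <= p t <= P) ->
  (forall t, a <= t <= b -> 0 <= q t <= Q) ->
  ex_RInt (fun t => p t * q t) a b.
Proof.
  intros Hab Hp Hq Bp Bq.
  apply (ex_RInt_osc_dominated _ (fun t => Q * p t - P * q t)); auto.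
  intros u v Hu Huv Hv. exists (p u * q v), (p v * q u).
  assert (p u <= p v) by (apply Hp; lra). assert (q v <= q u) by (apply Hq; lra).
  destruct (Bp u), (Bq u), (Bp v), (Bq v); try lra.
  split; [|nra].
  intros t Ht.
  assert (p u <= p t) by (apply Hp; lra). assert (p t <= p v) by (apply Hp; lra).
  assert (q t <= q u) by (apply Hq; lra). assert (q v <= q t) by (apply Hq; lra).
  destruct (Bp t), (Bq t); try lra.
  split; nra.
Qed.

Lemma ex_RInt_zero_then_decr (f : R -> R) a b c M : a <= b ->
  (forall t, a <= t <= b -> t <= c -> f t = 0) ->
  (forall u v, a <= u -> c < u -> u <= v -> v <= b -> f v <= f u) ->
  (forall t, a <= t <= b -> 0 <= f t <= M) ->
  ex_RInt f a b.
Proof.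
  intros Hab Hzero Hdecr Hbnd.
  apply (ex_RInt_osc_dominated f (fun t => if Rle_dec t c then - 2 * M else - f t)); auto.
  intros u v Hu Huv Hv.
  assert (HM : 0 <= M) by (destruct (Hbnd a); lra).
  destruct (Rle_dec v c) as [Hvc|Hvc].
  - exists 0, 0. split; [|destruct (Rle_dec u c); lra].
    intros t Ht. rewrite Hzero by lra. lra.
  - destruct (Rle_dec u c) as [Huc|Huc].
    + exists 0, M. split.
      * intros t Ht. destruct (Hbnd t); lra.
      * destruct (Hbnd v); lra.
    + exists (f v), (f u). split; [|lra].
      intros t Ht. split; apply Hdecr; lra.
Qed.

Lemma ex_RInt_subinterval (f : R -> R) a b c d : a <= c -> c <= d -> d <= b ->
  ex_RInt f a b -> ex_RInt f c d.
Proof.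
  intros Hac Hcd Hdb H.
  apply (ex_RInt_Chasles_1 (V := R_CompleteNormedModule) f c d b); [lra|].
  apply (ex_RInt_Chasles_2 (V := R_CompleteNormedModule) f a c b); [lra | exact H].
Qed.

(* Unqualified [RInt] is Coquelicot's operator; [Defs.RInt] is the choice-based one of [P1]. *)
Lemma Defs_RInt_RInt (f : R -> R) a b : ex_RInt f a b -> Defs.RInt f a b = RInt f a b.
Proof.
  intros H.
  assert (E : exists v, Defs.is_RInt f a b v).
  { exists (RInt f a b), (ex_RInt_Reals_0 f a b H). symmetry. apply RInt_Reals. }
  unfold Defs.RInt.
  destruct (epsilon_spec (inhabits 0) (fun v => Defs.is_RInt f a b v) E) as [pr <-].
  symmetry. apply RInt_Reals.
Qed.

Definition is_RInt_0_pinf (f : R -> R) (v : R) : Prop :=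
  (forall T, 0 <= T -> ex_RInt f 0 T) /\
  (forall e, 0 < e -> exists M, forall T, M <= T -> Rabs (RInt f 0 T - v) < e).

Lemma is_RInt_0_pinf_unique f v w : is_RInt_0_pinf f v -> is_RInt_0_pinf f w -> v = w.
Proof.
  intros [_ Hv] [_ Hw].
  destruct (Req_dec v w) as [|Hne]; [assumption|exfalso].
  assert (He : 0 < Rabs (v - w) / 2) by (apply Rdiv_lt_0_compat; [apply Rabs_pos_lt|]; lra).
  destruct (Hv _ He) as [M1 HM1]. destruct (Hw _ He) as [M2 HM2].
  specialize (HM1 (Rmax M1 M2) (Rmax_l _ _)). specialize (HM2 (Rmax M1 M2) (Rmax_r _ _)).
  set (I := RInt f 0 (Rmax M1 M2)) in *.
  assert (Rabs (v - w) <= Rabs (I - v) + Rabs (I - w)); [|lra].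
  replace (v - w) with (- (I - v) + (I - w)) by ring.
  eapply Rle_trans; [apply Rabs_triang|]. rewrite Rabs_Ropp. lra.
Qed.

Lemma RInt_0_inf_eq f v : is_RInt_0_pinf f v -> RInt_0_inf f = v.
Proof.
  intros [Hex Hlim].
  assert (Hdefs : forall T, 0 <= T -> Defs.RInt f 0 T = RInt f 0 T)
    by (intros T HT; apply Defs_RInt_RInt, Hex, HT).
  assert (D : is_RInt_0_inf f v).
  { split.
    - intros T HT. exists (RInt f 0 T), (ex_RInt_Reals_0 f 0 T (Hex T HT)).
      symmetry. apply RInt_Reals.
    - intros e He. destruct (Hlim e He) as [M HM]. exists (Rmax M 0). intros T HT.
      rewrite Hdefs by (eapply Rle_trans; [apply Rmax_r | exact HT]).
      apply HM. eapply Rle_trans; [apply Rmax_l | exact HT]. }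
  unfold RInt_0_inf.
  destruct (epsilon_spec (inhabits 0) (fun v => is_RInt_0_inf f v) (ex_intro _ v D))
    as [_ Hw].
  apply (is_RInt_0_pinf_unique f); [split; [exact Hex|] | split; assumption].
  intros e He. destruct (Hw e He) as [M HM]. exists (Rmax M 0). intros T HT.
  rewrite <- Hdefs by (eapply Rle_trans; [apply Rmax_r | exact HT]).
  apply HM. eapply Rle_trans; [apply Rmax_l | exact HT].
Qed.

Lemma is_RInt_0_pinf_bounded_nonneg (f : R -> R) C :
  (forall T, 0 <= T -> ex_RInt f 0 T) -> (forall x, 0 <= x -> 0 <= f x) ->
  (forall T, 0 <= T -> RInt f 0 T <= C) ->
  exists v, is_RInt_0_pinf f v /\ 0 <= v <= C.
Proof.
  intros Hex Hpos HC.
  assert (Hincr : forall T1 T2, 0 <= T1 <= T2 -> RInt f 0 T1 <= RInt f 0 T2).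
  { intros T1 T2 HT.
    assert (E1 : ex_RInt f 0 T1) by (apply (ex_RInt_subinterval f 0 T2); try lra; apply Hex; lra).
    assert (E2 : ex_RInt f T1 T2) by (apply (ex_RInt_subinterval f 0 T2); try lra; apply Hex; lra).
    rewrite (RInt_Chasles_R f 0 T1 T2 E1 E2).
    assert (0 <= RInt f T1 T2); [|lra].
    apply RInt_ge_0; try lra; auto. intros x Hx. apply Hpos. lra. }
  set (E := fun y => exists T, 0 <= T /\ y = RInt f 0 T).
  destruct (completeness E) as [v [Hub Hlub]].
  - exists C. intros y [T [HT ->]]. auto.
  - exists (RInt f 0 0), 0. split; [lra | reflexivity].
  assert (Hle : forall T, 0 <= T -> RInt f 0 T <= v) by (intros T HT; apply Hub; exists T; auto).
  exists v. split; [split; [exact Hex|] | split].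
  - intros e He.
    assert (exists T0, 0 <= T0 /\ v - e < RInt f 0 T0) as [T0 [HT0 Hv]].
    { apply Classical_Prop.NNPP. intros Hno.
      assert (v <= v - e); [|lra].
      apply Hlub. intros y [T [HT ->]]. apply Rnot_lt_le. intros Hlt. apply Hno. exists T; auto. }
    exists T0. intros T HT.
    pose proof (Hincr T0 T ltac:(lra)). pose proof (Hle T ltac:(lra)).
    apply Rabs_def1; lra.
  - pose proof (Hle 0 (Rle_refl 0)). rewrite RInt_point in H. exact H.
  - apply Hlub. intros y [T [HT ->]]. auto.
Qed.

Lemma is_RInt_0_pinf_ub f v C T0 : is_RInt_0_pinf f v ->
  (forall T, T0 <= T -> RInt f 0 T <= C) -> v <= C.
Proof.
  intros [_ Hlim] H. apply Rnot_lt_le. intros Hc.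
  destruct (Hlim (v - C)) as [M HM]; [lra|].
  specialize (HM (Rmax M T0) (Rmax_l _ _)). specialize (H (Rmax M T0) (Rmax_r _ _)).
  apply Rabs_def2 in HM. lra.
Qed.

Lemma is_RInt_0_pinf_le f g v w : is_RInt_0_pinf f v -> is_RInt_0_pinf g w ->
  (forall x, 0 <= x -> f x <= g x) -> v <= w.
Proof.
  intros [Ef Lf] [Eg Lg] H.
  apply Rnot_lt_le. intros Hc.
  destruct (Lf ((v - w) / 2)) as [M1 HM1]; [lra|].
  destruct (Lg ((v - w) / 2)) as [M2 HM2]; [lra|].
  set (T := Rmax 0 (Rmax M1 M2)).
  assert (H0T : 0 <= T) by apply Rmax_l.
  specialize (HM1 T ltac:(unfold T; eapply Rle_trans; [apply Rmax_l | apply Rmax_r])).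
  specialize (HM2 T ltac:(unfold T; eapply Rle_trans; [apply Rmax_r | apply Rmax_r])).
  assert (RInt f 0 T <= RInt g 0 T) by (apply RInt_le; auto; intros; apply H; lra).
  apply Rabs_def2 in HM1. apply Rabs_def2 in HM2. lra.
Qed.

Lemma is_RInt_0_pinf_scal f v k : is_RInt_0_pinf f v ->
  is_RInt_0_pinf (fun x => k * f x) (k * v).
Proof.
  intros [Ex Lim]. split.
  - intros T HT. apply ex_RInt_scal_R, Ex, HT.
  - intros e He.
    assert (Hk : 0 < Rabs k + 1) by (pose proof (Rabs_pos k); lra).
    destruct (Lim (e / (Rabs k + 1))) as [M HM]; [apply Rdiv_lt_0_compat; lra|].
    exists (Rmax M 0). intros T HT.
    assert (HT0 : 0 <= T) by (eapply Rle_trans; [apply Rmax_r | exact HT]).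
    specialize (HM T ltac:(eapply Rle_trans; [apply Rmax_l | exact HT])).
    rewrite RInt_scal_R by (apply Ex, HT0).
    replace (k * RInt f 0 T - k * v) with (k * (RInt f 0 T - v)) by ring.
    rewrite Rabs_mult.
    apply Rmult_lt_compat_l with (r := Rabs k + 1) in HM; [|lra].
    replace ((Rabs k + 1) * (e / (Rabs k + 1))) with e in HM by (field; lra).
    pose proof (Rabs_pos (RInt f 0 T - v)). nra.
Qed.

Lemma is_RInt_0_pinf_eventually_const f v T0 : (forall T, 0 <= T -> ex_RInt f 0 T) ->
  (forall T, T0 <= T -> RInt f 0 T = v) -> is_RInt_0_pinf f v.
Proof.
  intros Ex H. split; [exact Ex|]. intros e He. exists T0. intros T HT.
  rewrite H, Rminus_diag, Rabs_R0 by exact HT. exact He.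
Qed.

Lemma exp_le_exp_of_le x y : x <= y -> exp x <= exp y.
Proof. intros [Hlt | ->]; [left; apply exp_increasing, Hlt | lra]. Qed.

Lemma exp_le_1 x : x <= 0 -> exp x <= 1.
Proof. intros H. rewrite <- exp_0. apply exp_le_exp_of_le, H. Qed.

Lemma exp_decay_decr k x1 x2 : 0 <= k -> x1 <= x2 -> exp (- k * x2) <= exp (- k * x1).
Proof. intros Hk Hx. apply exp_le_exp_of_le. nra. Qed.

Lemma exp_density_bounds k z : 0 < k -> 0 <= z -> 0 < k * exp (- k * z) <= k.
Proof.
  intros Hk Hz. pose proof (exp_pos (- k * z)).
  assert (exp (- k * z) <= 1) by (apply exp_le_1; nra). split; nra.
Qed.

Lemma exp_density_decr k z1 z2 : 0 < k -> z1 <= z2 -> k * exp (- k * z2) <= k * exp (- k * z1).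
Proof. intros Hk Hz. apply Rmult_le_compat_l; [lra | apply exp_decay_decr; lra]. Qed.

Lemma is_RInt_exp_density k u v :
  is_RInt (fun z => k * exp (- k * z)) u v (exp (- k * u) - exp (- k * v)).
Proof.
  replace (exp (- k * u) - exp (- k * v))
    with (minus ((fun z => - exp (- k * z)) v) ((fun z => - exp (- k * z)) u))
    by (unfold minus, plus, opp; simpl; ring).
  apply (is_RInt_derive (fun z => - exp (- k * z))).
  - intros x _. auto_derive; [exact I | ring].
  - intros x _. apply continuity_pt_filterlim, derivable_continuous_pt. reg.
Qed.

Lemma ex_RInt_exp_density k u v : ex_RInt (fun z => k * exp (- k * z)) u v.
Proof. eexists. apply is_RInt_exp_density. Qed.

Lemma RInt_exp_density k u v :
  RInt (fun z => k * exp (- k * z)) u v = exp (- k * u) - exp (- k * v).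
Proof. apply is_RInt_unique, is_RInt_exp_density. Qed.

Lemma RInt_exp_density_le_1 k T : 0 < k -> 0 <= T -> RInt (fun z => k * exp (- k * z)) 0 T <= 1.
Proof.
  intros Hk HT. rewrite RInt_exp_density, Rmult_0_r, exp_0.
  pose proof (exp_pos (- k * T)). lra.
Qed.

Lemma one_minus_exp_opp_bounds t : 0 <= t -> 0 <= 1 - exp (- t) <= t.
Proof.
  intros Ht. pose proof (exp_ineq1_le (- t)).
  assert (exp (- t) <= 1) by (apply exp_le_1; lra). lra.
Qed.

Lemma one_minus_exp_opp_ge_half t : 0 <= t <= 1 -> t / 2 <= 1 - exp (- t).
Proof.
  intros Ht. pose proof (exp_ineq1_le t). pose proof (exp_pos (- t)).
  assert (exp (- t) * exp t = 1) by (rewrite <- exp_plus, Rplus_opp_l; apply exp_0).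
  nra.
Qed.

Lemma is_RInt_0_pinf_exp_weighted_decr k g M : 0 < k ->
  (forall z, 0 <= z -> 0 <= g z <= M) ->
  (forall z1 z2, 0 <= z1 -> z1 <= z2 -> g z2 <= g z1) ->
  exists v, is_RInt_0_pinf (fun z => k * exp (- k * z) * g z) v /\ 0 <= v <= M.
Proof.
  intros Hk Hg Hdecr.
  assert (HM : 0 <= M) by (destruct (Hg 0); lra).
  assert (Hex : forall T, 0 <= T -> ex_RInt (fun z => k * exp (- k * z) * g z) 0 T).
  { intros T HT. apply ex_RInt_decr; [exact HT|]. intros u v Hu Huv Hv.
    pose proof (exp_density_bounds k v Hk ltac:(lra)).
    pose proof (exp_density_decr k u v Hk Huv).
    pose proof (Hdecr u v Hu Huv). destruct (Hg v); [lra|]. nra. }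
  apply is_RInt_0_pinf_bounded_nonneg; [exact Hex | |].
  - intros z Hz. pose proof (exp_density_bounds k z Hk Hz). destruct (Hg z Hz). nra.
  - intros T HT.
    apply Rle_trans with (RInt (fun z => M * (k * exp (- k * z))) 0 T).
    + apply RInt_le; [exact HT | apply Hex, HT | apply ex_RInt_scal_R, ex_RInt_exp_density |].
      intros z Hz. pose proof (exp_density_bounds k z Hk ltac:(lra)).
      destruct (Hg z ltac:(lra)). nra.
    + rewrite RInt_scal_R by apply ex_RInt_exp_density.
      pose proof (RInt_exp_density_le_1 k T Hk HT). nra.
Qed.

Lemma is_RInt_0_pinf_le_support f v c M : is_RInt_0_pinf f v -> 0 <= c -> 0 <= M ->
  (forall x, 0 <= x <= c -> f x <= M) -> (forall x, c < x -> f x = 0) -> v <= M * c.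
Proof.
  intros Hf Hc HM Hle Hzero. apply (is_RInt_0_pinf_ub f v _ 0 Hf). intros T HT.
  assert (Hex : ex_RInt f 0 T) by (apply (proj1 Hf), HT).
  set (c' := Rmin c T).
  assert (Hc' : 0 <= c' <= T /\ c' <= c)
    by (unfold c'; split; [split; [apply Rmin_glb | apply Rmin_r] | apply Rmin_l]; lra).
  assert (E1 : ex_RInt f 0 c') by (apply (ex_RInt_subinterval f 0 T); tauto || lra).
  assert (E2 : ex_RInt f c' T) by (apply (ex_RInt_subinterval f 0 T); tauto || lra).
  rewrite (RInt_Chasles_R f 0 c' T E1 E2).
  assert (Hhead : RInt f 0 c' <= (c' - 0) * M).
  { rewrite <- RInt_cst. apply RInt_le; try tauto.
    - apply ex_RInt_const.
    - intros x Hx. apply Hle. lra. }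
  assert (Htail : RInt f c' T = 0).
  { destruct (Rle_lt_dec c T) as [HcT | HcT].
    - assert (Hcc : c' = c) by (apply Rmin_left; lra).
      transitivity (RInt (fun _ => 0) c' T); [|rewrite RInt_cst, Rmult_0_r; reflexivity].
      apply RInt_ext_open; [lra|]. intros x Hx. apply Hzero. lra.
    - assert (Hcc : c' = T) by (apply Rmin_right; lra).
      rewrite Hcc. apply (RInt_point (V := R_CompleteNormedModule)). }
  nra.
Qed.

Lemma ind_lt_1 u w : u < w -> ind_lt u w = 1.
Proof. intros H. unfold ind_lt. destruct (Rlt_dec u w); lra. Qed.

Lemma ind_lt_0 u w : w <= u -> ind_lt u w = 0.
Proof. intros H. unfold ind_lt. destruct (Rlt_dec u w); lra. Qed.

Lemma ind_lt_bounds u w : 0 <= ind_lt u w <= 1.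
Proof. unfold ind_lt. destruct (Rlt_dec u w); lra. Qed.

Lemma ind_lt_antimono u u' w : u <= u' -> ind_lt u' w <= ind_lt u w.
Proof. intros H. unfold ind_lt. destruct (Rlt_dec u w), (Rlt_dec u' w); lra. Qed.

Lemma is_RInt_0_pinf_exp_truncated k c : 0 < k -> 0 < c ->
  is_RInt_0_pinf (fun z => k * exp (- k * z) * ind_lt z c) (1 - exp (- k * c)).
Proof.
  intros Hk Hc.
  assert (Hex : forall T, 0 <= T -> ex_RInt (fun z => k * exp (- k * z) * ind_lt z c) 0 T).
  { intros T HT. apply ex_RInt_decr; [exact HT|]. intros u v Hu Huv Hv.
    pose proof (exp_density_bounds k v Hk ltac:(lra)).
    pose proof (exp_density_decr k u v Hk Huv).
    pose proof (ind_lt_antimono u v c Huv). pose proof (ind_lt_bounds v c). nra. }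
  apply (is_RInt_0_pinf_eventually_const _ _ c Hex). intros T HT.
  rewrite (RInt_Chasles_R _ 0 c T)
    by (apply (ex_RInt_subinterval _ 0 T); try lra; apply Hex; lra).
  rewrite (RInt_ext_open _ (fun z => k * exp (- k * z)) 0 c)
    by (lra || (intros x Hx; rewrite ind_lt_1 by lra; ring)).
  rewrite (RInt_ext_open _ (fun _ => 0) c T)
    by (lra || (intros x Hx; rewrite ind_lt_0 by lra; ring)).
  rewrite RInt_cst, RInt_exp_density, Rmult_0_r, exp_0. simpl. ring.
Qed.

Lemma is_RInt_inv_shift c u v : c < u -> u <= v ->
  is_RInt (fun x => / (x - c)) u v (ln (v - c) - ln (u - c)).
Proof.
  intros Hu Huv.
  replace (ln (v - c) - ln (u - c))
    with (minus ((fun x => ln (x - c)) v) ((fun x => ln (x - c)) u))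
    by (unfold minus, plus, opp; simpl; ring).
  apply (is_RInt_derive (fun x => ln (x - c))).
  - intros x Hx. rewrite Rmin_left, Rmax_right in Hx by lra.
    auto_derive; [lra | field; lra].
  - intros x Hx. rewrite Rmin_left, Rmax_right in Hx by lra.
    apply continuity_pt_filterlim, continuity_pt_inv; [|lra].
    apply derivable_continuous_pt. reg.
Qed.

Lemma is_RInt_radial_density RD : 0 < RD -> is_RInt (fun r => 2 * r / RD ^ 2) 0 RD 1.
Proof.
  intros HRD.
  replace 1 with (minus ((fun r => r ^ 2 / RD ^ 2) RD) ((fun r => r ^ 2 / RD ^ 2) 0))
    by (unfold minus, plus, opp; simpl; field; lra).
  apply (is_RInt_derive (fun r => r ^ 2 / RD ^ 2)).
  - intros x _. auto_derive; [lra | field; lra].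
  - intros x _. apply continuity_pt_filterlim, derivable_continuous_pt. reg.
Qed.

Lemma Defs_RInt_radial_density_bounds RD (h : R -> R) lo hi : 0 < RD ->
  ex_RInt (fun r => 2 * r / RD ^ 2 * h r) 0 RD ->
  (forall r, 0 <= r <= RD -> lo <= h r <= hi) ->
  lo <= Defs.RInt (fun r => 2 * r / RD ^ 2 * h r) 0 RD <= hi.
Proof.
  intros HRD Hex Hh. rewrite Defs_RInt_RInt by exact Hex.
  assert (Hd := is_RInt_radial_density RD HRD).
  assert (Exd : ex_RInt (fun r => 2 * r / RD ^ 2) 0 RD) by (eexists; exact Hd).
  assert (Hmass : forall c, RInt (fun r => c * (2 * r / RD ^ 2)) 0 RD = c).
  { intros c. rewrite RInt_scal_R, (is_RInt_unique _ _ _ _ Hd) by exact Exd. apply Rmult_1_r. }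
  assert (Hdens : forall r, 0 <= r -> 0 <= 2 * r / RD ^ 2)
    by (intros r Hr; apply Rdiv_le_0_compat; [lra | apply pow_lt; lra]).
  split.
  - rewrite <- (Hmass lo) at 1. apply RInt_le; [lra | apply ex_RInt_scal_R, Exd | exact Hex |].
    intros r Hr. pose proof (Hdens r ltac:(lra)). destruct (Hh r ltac:(lra)). nra.
  - rewrite <- (Hmass hi). apply RInt_le; [lra | exact Hex | apply ex_RInt_scal_R, Exd |].
    intros r Hr. pose proof (Hdens r ltac:(lra)). destruct (Hh r ltac:(lra)). nra.
Qed.

Lemma RInt_0_inf_spec f (P : R -> Prop) : (exists v, is_RInt_0_pinf f v /\ P v) ->
  is_RInt_0_pinf f (RInt_0_inf f) /\ P (RInt_0_inf f).
Proof. intros [v [Hf HP]]. rewrite (RInt_0_inf_eq f v Hf). split; assumption. Qed.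

Section RelayOutage.

Variables (a eps eta : R).
Hypotheses (ha : 0 < a) (heps : 0 < eps) (heta : 0 < eta).

(** With [x], [y], [z] standing for [x_i], [y_i], [x_0]: [relay_z x y] and [relay_yz x] are
    the probabilities of the relayed outage event given [(x_i, y_i) = (x, y)], resp. [x_i = x]. *)
Definition relay_ind (x y z : R) : R := ind_lt eps x * ind_lt (z + eta * y * (x - eps)) eps.
Definition relay_z (x y : R) : R := RInt_0_inf (fun z => a * exp (- a * z) * relay_ind x y z).
Definition relay_yz (x : R) : R := RInt_0_inf (fun y => a * exp (- a * y) * relay_z x y).
Definition relay_laplace (b : R) : R := RInt_0_inf (fun x => exp (- b * x) * relay_yz x).
Definition direct_z (x : R) : R :=
  RInt_0_inf (fun z => a * exp (- a * z) * (ind_lt x eps * ind_lt z eps)).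

Lemma relay_ind_bounds x y z : 0 <= relay_ind x y z <= 1.
Proof.
  unfold relay_ind.
  pose proof (ind_lt_bounds eps x). pose proof (ind_lt_bounds (z + eta * y * (x - eps)) eps).
  nra.
Qed.

Lemma relay_ind_eq_0_undecoded x y z : x <= eps -> relay_ind x y z = 0.
Proof. intros H. unfold relay_ind. rewrite ind_lt_0 by lra. ring. Qed.

Lemma relay_ind_eq_0_large_y x y z : 0 <= z -> eps <= eta * y * (x - eps) ->
  relay_ind x y z = 0.
Proof. intros Hz H. unfold relay_ind. rewrite (ind_lt_0 (z + _)) by lra. ring. Qed.

Lemma relay_ind_eq_0_large_z x y z : 0 <= y -> eps <= z -> relay_ind x y z = 0.
Proof.
  intros Hy Hz. destruct (Rle_dec x eps) as [Hx | Hx]; [apply relay_ind_eq_0_undecoded, Hx|].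
  unfold relay_ind. rewrite (ind_lt_0 (z + _)); [ring|].
  assert (0 <= eta * y * (x - eps)); [|lra].
  apply Rmult_le_pos; [apply Rmult_le_pos|]; lra.
Qed.

Lemma relay_ind_decr_z x y z1 z2 : z1 <= z2 -> relay_ind x y z2 <= relay_ind x y z1.
Proof.
  intros H. unfold relay_ind. pose proof (ind_lt_bounds eps x).
  pose proof (ind_lt_antimono (z1 + eta * y * (x - eps)) (z2 + eta * y * (x - eps)) eps
                ltac:(lra)).
  nra.
Qed.

Lemma relay_ind_decr_y x y1 y2 z : y1 <= y2 -> relay_ind x y2 z <= relay_ind x y1 z.
Proof.
  intros H. destruct (Rle_dec x eps) as [Hx | Hx].
  - rewrite !relay_ind_eq_0_undecoded by exact Hx. lra.
  - unfold relay_ind. rewrite ind_lt_1 by lra. rewrite !Rmult_1_l.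
    apply ind_lt_antimono. apply Rplus_le_compat_l, Rmult_le_compat_r; [lra|].
    apply Rmult_le_compat_l; lra.
Qed.

Lemma relay_ind_decr_x x1 x2 y z : 0 <= y -> eps < x1 -> x1 <= x2 ->
  relay_ind x2 y z <= relay_ind x1 y z.
Proof.
  intros Hy H1 H2. unfold relay_ind.
  rewrite (ind_lt_1 eps x1), (ind_lt_1 eps x2), !Rmult_1_l by lra.
  apply ind_lt_antimono. apply Rplus_le_compat_l, Rmult_le_compat_l; [|lra].
  apply Rmult_le_pos; lra.
Qed.

Lemma relay_z_spec x y :
  is_RInt_0_pinf (fun z => a * exp (- a * z) * relay_ind x y z) (relay_z x y) /\
  0 <= relay_z x y <= 1.
Proof.
  unfold relay_z. apply (RInt_0_inf_spec _ (fun v => 0 <= v <= 1)).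
  apply is_RInt_0_pinf_exp_weighted_decr; [exact ha | |].
  - intros z _. apply relay_ind_bounds.
  - intros z1 z2 _. apply relay_ind_decr_z.
Qed.

Lemma relay_z_le x y : 0 <= y -> relay_z x y <= a * eps.
Proof.
  intros Hy. apply (is_RInt_0_pinf_le_support _ _ eps a (proj1 (relay_z_spec x y))); try lra.
  - intros z Hz. pose proof (exp_density_bounds a z ha ltac:(lra)).
    pose proof (relay_ind_bounds x y z). nra.
  - intros z Hz. rewrite relay_ind_eq_0_large_z by lra. ring.
Qed.

Lemma relay_z_eq_0 x y : (forall z, 0 <= z -> relay_ind x y z = 0) -> relay_z x y = 0.
Proof.
  intros H. apply Rle_antisym; [|apply relay_z_spec].
  replace 0 with (0 * 0) by ring.
  apply (is_RInt_0_pinf_le_support _ _ 0 0 (proj1 (relay_z_spec x y))); try lra.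
  - intros z Hz. rewrite H by lra. lra.
  - intros z Hz. rewrite H by lra. ring.
Qed.

Lemma relay_z_decr_y x y1 y2 : y1 <= y2 -> relay_z x y2 <= relay_z x y1.
Proof.
  intros H.
  apply (is_RInt_0_pinf_le _ _ _ _ (proj1 (relay_z_spec x y2)) (proj1 (relay_z_spec x y1))).
  intros z Hz. pose proof (exp_density_bounds a z ha Hz).
  pose proof (relay_ind_decr_y x y1 y2 z H). nra.
Qed.

Lemma relay_z_decr_x x1 x2 y : 0 <= y -> eps < x1 -> x1 <= x2 -> relay_z x2 y <= relay_z x1 y.
Proof.
  intros Hy H1 H2.
  apply (is_RInt_0_pinf_le _ _ _ _ (proj1 (relay_z_spec x2 y)) (proj1 (relay_z_spec x1 y))).
  intros z Hz. pose proof (exp_density_bounds a z ha Hz).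
  pose proof (relay_ind_decr_x x1 x2 y z Hy H1 H2). nra.
Qed.

Lemma relay_yz_spec x :
  is_RInt_0_pinf (fun y => a * exp (- a * y) * relay_z x y) (relay_yz x) /\
  0 <= relay_yz x <= a * eps.
Proof.
  unfold relay_yz. apply (RInt_0_inf_spec _ (fun v => 0 <= v <= a * eps)).
  apply is_RInt_0_pinf_exp_weighted_decr; [exact ha | |].
  - intros y Hy. split; [apply relay_z_spec | apply relay_z_le, Hy].
  - intros y1 y2 _. apply relay_z_decr_y.
Qed.

Lemma relay_yz_eq_0 x : x <= eps -> relay_yz x = 0.
Proof.
  intros Hx. apply Rle_antisym; [|apply relay_yz_spec].
  assert (Hz : forall y, relay_z x y = 0).
  { intros y. apply relay_z_eq_0. intros z _. apply relay_ind_eq_0_undecoded, Hx. }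
  replace 0 with (0 * 0) by ring.
  apply (is_RInt_0_pinf_le_support _ _ 0 0 (proj1 (relay_yz_spec x))); try lra.
  - intros y _. rewrite Hz. lra.
  - intros y _. rewrite Hz. ring.
Qed.

(** Given [x_i = x > eps], outage needs [y_i < eps / (eta (x - eps))] and [x_0 < eps]. *)
Lemma relay_yz_le_inv x : eps < x -> relay_yz x <= a * eps * (a * eps / eta) / (x - eps).
Proof.
  intros Hx.
  set (c := eps / (eta * (x - eps))).
  assert (Hc : 0 < c) by (apply Rdiv_lt_0_compat; nra).
  replace (a * eps * (a * eps / eta) / (x - eps)) with (a * (a * eps) * c)
    by (unfold c; field; lra).
  apply (is_RInt_0_pinf_le_support _ _ c _ (proj1 (relay_yz_spec x))); try nra.
  - intros y Hy. pose proof (exp_density_bounds a y ha ltac:(lra)).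
    pose proof (relay_z_spec x y). pose proof (relay_z_le x y ltac:(lra)). nra.
  - intros y Hy. rewrite relay_z_eq_0; [ring|]. intros z Hz.
    apply relay_ind_eq_0_large_y; [exact Hz|].
    assert (c * (eta * (x - eps)) = eps) by (unfold c; field; lra).
    nra.
Qed.

Lemma relay_yz_decr x1 x2 : eps < x1 -> x1 <= x2 -> relay_yz x2 <= relay_yz x1.
Proof.
  intros H1 H2.
  apply (is_RInt_0_pinf_le _ _ _ _ (proj1 (relay_yz_spec x2)) (proj1 (relay_yz_spec x1))).
  intros y Hy. pose proof (exp_density_bounds a y ha Hy).
  pose proof (relay_z_decr_x x1 x2 y Hy H1 H2). nra.
Qed.

Lemma relay_laplace_spec b : 0 < b ->
  is_RInt_0_pinf (fun x => exp (- b * x) * relay_yz x) (relay_laplace b) /\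
  0 <= relay_laplace b.
Proof.
  intros Hb. unfold relay_laplace. apply (RInt_0_inf_spec _ (fun v => 0 <= v)).
  assert (Hbnd : forall x, 0 <= x -> 0 <= exp (- b * x) * relay_yz x <= a * eps).
  { intros x Hx. pose proof (relay_yz_spec x) as [_ Hyz]. pose proof (exp_pos (- b * x)).
    assert (exp (- b * x) <= 1) by (apply exp_le_1; nra). split; nra. }
  assert (Hex : forall T, 0 <= T -> ex_RInt (fun x => exp (- b * x) * relay_yz x) 0 T).
  { intros T HT. apply (ex_RInt_zero_then_decr _ 0 T eps (a * eps)); [exact HT | | |].
    - intros t Ht Hte. rewrite relay_yz_eq_0 by exact Hte. ring.
    - intros u v Hu Hcu Huv Hv. pose proof (relay_yz_spec v).
      pose proof (exp_decay_decr b u v ltac:(lra) Huv). pose proof (exp_pos (- b * v)).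
      pose proof (relay_yz_decr u v Hcu Huv). nra.
    - intros t Ht. apply Hbnd. lra. }
  destruct (is_RInt_0_pinf_bounded_nonneg _ (a * eps / b) Hex) as [v [Hv [Hv0 _]]];
    [apply Hbnd | | exists v; split; assumption].
  intros T HT. apply Rle_trans with (RInt (fun x => a * eps / b * (b * exp (- b * x))) 0 T).
  - apply RInt_le; [exact HT | apply Hex, HT | apply ex_RInt_scal_R, ex_RInt_exp_density |].
    intros x Hx. replace (a * eps / b * (b * exp (- b * x))) with (exp (- b * x) * (a * eps))
      by (field; lra).
    pose proof (relay_yz_spec x). pose proof (exp_pos (- b * x)). nra.
  - rewrite RInt_scal_R by apply ex_RInt_exp_density.
    pose proof (RInt_exp_density_le_1 b T Hb HT).
    assert (0 < a * eps / b) by (apply Rdiv_lt_0_compat; nra). nra.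
Qed.

Lemma relay_term_eq b : 0 < b ->
  RInt_0_inf (fun x => b * exp (- b * x) * relay_yz x) = b * relay_laplace b.
Proof.
  intros Hb. apply RInt_0_inf_eq.
  replace (fun x => b * exp (- b * x) * relay_yz x)
    with (fun x => b * (exp (- b * x) * relay_yz x))
    by (apply functional_extensionality; intros x; ring).
  apply is_RInt_0_pinf_scal, relay_laplace_spec, Hb.
Qed.

Lemma relay_laplace_decr b1 b2 : 0 < b1 -> b1 <= b2 -> relay_laplace b2 <= relay_laplace b1.
Proof.
  intros Hb1 Hb.
  apply (is_RInt_0_pinf_le _ _ _ _ (proj1 (relay_laplace_spec b2 ltac:(lra)))
           (proj1 (relay_laplace_spec b1 Hb1))).
  intros x Hx. pose proof (relay_yz_spec x).
  pose proof (exp_le_exp_of_le (- b2 * x) (- b1 * x) ltac:(nra)). nra.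
Qed.

Lemma relay_laplace_integrand_le b x : 0 <= b -> 0 <= x -> exp (- b * x) * relay_yz x <= a * eps.
Proof.
  intros Hb Hx. destruct (relay_yz_spec x) as [_ Hyz]. pose proof (exp_pos (- b * x)).
  assert (exp (- b * x) <= 1) by (apply exp_le_1; nra). nra.
Qed.

Lemma relay_laplace_integrand_le_inv b x : 0 <= b -> eps < x ->
  exp (- b * x) * relay_yz x <= a * eps * (a * eps / eta) / (x - eps).
Proof.
  intros Hb Hx. destruct (relay_yz_spec x) as [_ Hyz]. pose proof (relay_yz_le_inv x Hx).
  pose proof (exp_pos (- b * x)). assert (exp (- b * x) <= 1) by (apply exp_le_1; nra).
  assert (exp (- b * x) * relay_yz x <= relay_yz x) by nra. lra.
Qed.

Lemma relay_laplace_integrand_le_far b x : 1 <= b -> eps + 1 <= x ->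
  exp (- b * x) * relay_yz x <= a * eps * (a * eps / eta) * (1 * exp (- (1) * x)).
Proof.
  intros Hb Hx. set (s := a * eps / eta).
  assert (Haes : 0 < a * eps * s)
    by (apply Rmult_lt_0_compat; [nra | apply Rdiv_lt_0_compat; nra]).
  assert (HV : relay_yz x <= a * eps * s).
  { apply (Rle_trans _ _ _ (relay_yz_le_inv x ltac:(lra))). fold s. unfold Rdiv.
    rewrite <- (Rmult_1_r (a * eps * s)) at 2. apply Rmult_le_compat_l; [lra|].
    rewrite <- Rinv_1. apply Rinv_le_contravar; lra. }
  destruct (relay_yz_spec x) as [_ Hyz].
  pose proof (exp_le_exp_of_le (- b * x) (- (1) * x) ltac:(nra)).
  pose proof (exp_pos (- b * x)). nra.
Qed.

(** Split at [eps + s] and [eps + 1]: the middle piece, where only the [1 / (x - eps)] bound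
    is available, produces the logarithmic factor. *)
Lemma relay_laplace_le b : 1 <= b -> a * eps / eta <= 1 ->
  relay_laplace b <=
  a * eps * (eps + 2 * (a * eps / eta) - (a * eps / eta) * ln (a * eps / eta)).
Proof.
  intros Hb Hs. set (s := a * eps / eta) in *.
  assert (Hs0 : 0 < s) by (unfold s; apply Rdiv_lt_0_compat; nra).
  assert (Haes : 0 < a * eps * s) by (apply Rmult_lt_0_compat; [apply Rmult_lt_0_compat|]; lra).
  set (f := fun x => exp (- b * x) * relay_yz x).
  destruct (relay_laplace_spec b ltac:(lra)) as [Hf _]. fold f in Hf.
  apply (is_RInt_0_pinf_ub _ _ _ (eps + 1) Hf). intros T HT.
  assert (Hex : forall u v, 0 <= u -> u <= v -> v <= T -> ex_RInt f u v)
    by (intros u v Hu Huv Hv; apply (ex_RInt_subinterval f 0 T); try lra; apply Hf; lra).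
  rewrite (RInt_Chasles_R f 0 (eps + 1) T), (RInt_Chasles_R f 0 (eps + s) (eps + 1))
    by (apply Hex; lra).
  assert (Hhead : RInt f 0 (eps + s) <= (eps + s) * (a * eps)).
  { replace ((eps + s) * (a * eps)) with ((eps + s - 0) * (a * eps)) by ring.
    rewrite <- RInt_cst. apply RInt_le; [lra | apply Hex; lra | apply ex_RInt_const |].
    intros x Hx. apply relay_laplace_integrand_le; lra. }
  assert (Hinv := is_RInt_inv_shift eps (eps + s) (eps + 1) ltac:(lra) ltac:(lra)).
  replace (eps + 1 - eps) with 1 in Hinv by ring. replace (eps + s - eps) with s in Hinv by ring.
  rewrite ln_1 in Hinv.
  assert (Hmiddle : RInt f (eps + s) (eps + 1) <= a * eps * s * (0 - ln s)).
  { rewrite <- (is_RInt_unique _ _ _ _ Hinv), <- RInt_scal_R by (eexists; exact Hinv).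
    apply RInt_le; [lra | apply Hex; lra | apply ex_RInt_scal_R; eexists; exact Hinv |].
    intros x Hx. apply relay_laplace_integrand_le_inv; lra. }
  assert (Htail : RInt f (eps + 1) T <= a * eps * s).
  { apply Rle_trans with (RInt (fun x => a * eps * s * (1 * exp (- (1) * x))) (eps + 1) T).
    - apply RInt_le; [lra | apply Hex; lra | apply ex_RInt_scal_R, ex_RInt_exp_density |].
      intros x Hx. apply relay_laplace_integrand_le_far; lra.
    - rewrite RInt_scal_R, RInt_exp_density by apply ex_RInt_exp_density.
      pose proof (exp_pos (- (1) * T)).
      assert (exp (- (1) * (eps + 1)) <= 1) by (apply exp_le_1; lra).
      rewrite <- (Rmult_1_r (a * eps * s)) at 2. apply Rmult_le_compat_l; lra. }
  nra.
Qed.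

Lemma direct_z_eq x : direct_z x = ind_lt x eps * (1 - exp (- a * eps)).
Proof.
  apply RInt_0_inf_eq.
  replace (fun z => a * exp (- a * z) * (ind_lt x eps * ind_lt z eps))
    with (fun z => ind_lt x eps * (a * exp (- a * z) * ind_lt z eps))
    by (apply functional_extensionality; intros z; ring).
  apply is_RInt_0_pinf_scal, is_RInt_0_pinf_exp_truncated; assumption.
Qed.

Lemma direct_term_eq b : 0 < b ->
  RInt_0_inf (fun x => b * exp (- b * x) * direct_z x) =
  (1 - exp (- a * eps)) * (1 - exp (- b * eps)).
Proof.
  intros Hb. apply RInt_0_inf_eq.
  replace (fun x => b * exp (- b * x) * direct_z x)
    with (fun x => (1 - exp (- a * eps)) * (b * exp (- b * x) * ind_lt x eps))
    by (apply functional_extensionality; intros x; rewrite direct_z_eq; ring).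
  apply is_RInt_0_pinf_scal, is_RInt_0_pinf_exp_truncated; assumption.
Qed.

Definition outage_given_r (r : R) : R :=
  RInt_0_inf (fun x => (1 + r ^ 2) * exp (- (1 + r ^ 2) * x) * relay_yz x) +
  RInt_0_inf (fun x => (1 + r ^ 2) * exp (- (1 + r ^ 2) * x) * direct_z x).

Lemma outage_given_r_eq r : outage_given_r r =
  (1 + r ^ 2) * relay_laplace (1 + r ^ 2) + (1 - exp (- a * eps)) * (1 - exp (- (1 + r ^ 2) * eps)).
Proof.
  assert (Hb : 0 < 1 + r ^ 2) by (pose proof (pow2_ge_0 r); lra).
  unfold outage_given_r. rewrite relay_term_eq, direct_term_eq by exact Hb. reflexivity.
Qed.

Lemma outage_given_r_ge r : 0 <= r ->
  (1 - exp (- a * eps)) * (1 - exp (- eps)) <= outage_given_r r.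
Proof.
  intros Hr. rewrite outage_given_r_eq.
  assert (Hb : 1 <= 1 + r ^ 2) by (pose proof (pow2_ge_0 r); lra).
  pose proof (proj2 (relay_laplace_spec (1 + r ^ 2) ltac:(lra))).
  pose proof (one_minus_exp_opp_bounds (a * eps) ltac:(nra)).
  replace (- a * eps) with (- (a * eps)) by ring.
  pose proof (exp_le_exp_of_le (- (1 + r ^ 2) * eps) (- eps) ltac:(nra)).
  nra.
Qed.

Lemma outage_given_r_le RD r : 1 <= a -> a * eps / eta <= 1 -> 0 <= r <= RD ->
  outage_given_r r <= (1 + RD ^ 2) *
    (a * eps * (eps + 2 * (a * eps / eta) - (a * eps / eta) * ln (a * eps / eta)) + a * eps * eps).
Proof.
  intros Ha Hs Hr. rewrite outage_given_r_eq.
  assert (Hb : 1 <= 1 + r ^ 2) by (pose proof (pow2_ge_0 r); lra).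
  assert (HrRD : 1 + r ^ 2 <= 1 + RD ^ 2) by nra.
  pose proof (proj2 (relay_laplace_spec (1 + r ^ 2) ltac:(lra))).
  pose proof (relay_laplace_le (1 + r ^ 2) Hb Hs).
  pose proof (one_minus_exp_opp_bounds (a * eps) ltac:(nra)).
  pose proof (one_minus_exp_opp_bounds ((1 + r ^ 2) * eps) ltac:(nra)).
  replace (- a * eps) with (- (a * eps)) by ring.
  replace (- (1 + r ^ 2) * eps) with (- ((1 + r ^ 2) * eps)) by ring.
  set (G := relay_laplace (1 + r ^ 2)) in *.
  set (Gb := a * eps * _) in *.
  set (c0 := 1 - exp (- (a * eps))) in *. set (c1 := 1 - exp (- ((1 + r ^ 2) * eps))) in *.
  assert (Hrelay : (1 + r ^ 2) * G <= (1 + RD ^ 2) * Gb) by (apply Rmult_le_compat; lra).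
  assert (Hdirect : c0 * c1 <= a * eps * ((1 + r ^ 2) * eps)) by (apply Rmult_le_compat; lra).
  assert (a * eps * ((1 + r ^ 2) * eps) <= (1 + RD ^ 2) * (a * eps * eps)); [|lra].
  replace (a * eps * ((1 + r ^ 2) * eps)) with ((1 + r ^ 2) * (a * eps * eps)) by ring.
  apply Rmult_le_compat_r; [|lra]. apply Rmult_le_pos; [apply Rmult_le_pos|]; lra.
Qed.

Lemma ex_RInt_outage_radial RD : 0 < RD ->
  ex_RInt (fun r => 2 * r / RD ^ 2 * outage_given_r r) 0 RD.
Proof.
  intros HRD.
  set (c0 := 1 - exp (- a * eps)).
  assert (Hc0 : 0 <= c0) by (unfold c0; replace (- a * eps) with (- (a * eps)) by ring;
                             apply one_minus_exp_opp_bounds; nra).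
  set (dens := fun r => 2 * r / RD ^ 2).
  assert (Hdens : forall u v, 0 <= u -> u <= v -> 0 <= dens u <= dens v).
  { intros u v Hu Huv. unfold dens, Rdiv.
    assert (0 < / RD ^ 2) by (apply Rinv_0_lt_compat, pow_lt; lra). nra. }
  assert (Hsq : forall u v, 0 <= u -> u <= v -> 1 <= 1 + u ^ 2 <= 1 + v ^ 2) by (intros; nra).
  assert (Hsplit : forall r, dens r * (1 + r ^ 2) * relay_laplace (1 + r ^ 2)
                    + dens r * (c0 * (1 - exp (- (1 + r ^ 2) * eps)))
                    = 2 * r / RD ^ 2 * outage_given_r r).
  { intros r. rewrite outage_given_r_eq. fold c0. unfold dens. ring. }
  apply (ex_RInt_ext _ _ 0 RD (fun r _ => Hsplit r)).
  apply (ex_RInt_plus (V := R_NormedModule)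
           (fun r => dens r * (1 + r ^ 2) * relay_laplace (1 + r ^ 2))
           (fun r => dens r * (c0 * (1 - exp (- (1 + r ^ 2) * eps))))).
  - apply (ex_RInt_mult_incr_decr _ _ 0 RD (dens RD * (1 + RD ^ 2)) (relay_laplace 1));
      [lra | | | |].
    + intros u v Hu Huv Hv. destruct (Hdens u v Hu Huv), (Hsq u v Hu Huv).
      apply Rmult_le_compat; lra.
    + intros u v Hu Huv Hv. destruct (Hsq u v Hu Huv). apply relay_laplace_decr; lra.
    + intros t Ht. destruct (Hdens t RD ltac:(lra) ltac:(lra)), (Hsq t RD ltac:(lra) ltac:(lra)).
      split; [apply Rmult_le_pos|apply Rmult_le_compat]; lra.
    + intros t Ht. destruct (Hsq 0 t ltac:(lra) ltac:(lra)).
      split; [apply relay_laplace_spec | apply relay_laplace_decr]; lra.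
  - apply ex_RInt_incr; [lra|]. intros u v Hu Huv Hv.
    destruct (Hdens u v Hu Huv), (Hsq u v Hu Huv).
    pose proof (exp_le_exp_of_le (- (1 + v ^ 2) * eps) (- (1 + u ^ 2) * eps) ltac:(nra)).
    pose proof (one_minus_exp_opp_bounds ((1 + u ^ 2) * eps) ltac:(nra)).
    replace (- ((1 + u ^ 2) * eps)) with (- (1 + u ^ 2) * eps) in * by ring.
    apply Rmult_le_compat; [lra | nra | lra |]. apply Rmult_le_compat_l; lra.
Qed.

Definition outage_avg (RD : R) : R :=
  Defs.RInt (fun r => 2 * r / RD ^ 2 * outage_given_r r) 0 RD.

Lemma outage_avg_bounds RD : 0 < RD -> 1 <= a -> eta <= 1 -> a * eps / eta <= 1 ->
  a * eps * eps / 4 <= outage_avg RD <=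
  eps * eps * ((1 + RD ^ 2) * a * (2 + 2 * a / eta) + (1 + RD ^ 2) * a * a / eta * (- ln eps)).
Proof.
  intros HRD Ha Heta Hs.
  assert (Hae : a * eps <= a * eps / eta).
  { unfold Rdiv. rewrite <- (Rmult_1_r (a * eps)) at 1. apply Rmult_le_compat_l; [nra|].
    rewrite <- Rinv_1. apply Rinv_le_contravar; lra. }
  destruct (Defs_RInt_radial_density_bounds RD outage_given_r
              ((1 - exp (- a * eps)) * (1 - exp (- eps)))
              ((1 + RD ^ 2) * (a * eps * (eps + 2 * (a * eps / eta)
                 - (a * eps / eta) * ln (a * eps / eta)) + a * eps * eps))
              HRD (ex_RInt_outage_radial RD HRD)) as [Hlo Hhi].
  { intros r Hr. split; [apply outage_given_r_ge | apply outage_given_r_le]; lra. }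
  fold (outage_avg RD) in Hlo, Hhi. split.
  - eapply Rle_trans; [|exact Hlo].
    replace (- a * eps) with (- (a * eps)) by ring.
    pose proof (one_minus_exp_opp_ge_half (a * eps) ltac:(nra)).
    pose proof (one_minus_exp_opp_ge_half eps ltac:(nra)).
    replace (a * eps * eps / 4) with ((a * eps / 2) * (eps / 2)) by field.
    apply Rmult_le_compat; nra.
  - eapply Rle_trans; [exact Hhi|].
    set (s := a * eps / eta) in *.
    assert (Hs0 : 0 < s) by (unfold s; apply Rdiv_lt_0_compat; nra).
    assert (eps <= a * eps) by nra.
    assert (Hln : - ln s <= - ln eps) by (apply Ropp_le_contravar, ln_le; lra).
    replace (eps * eps * ((1 + RD ^ 2) * a * (2 + 2 * a / eta)
                          + (1 + RD ^ 2) * a * a / eta * (- ln eps)))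
      with ((1 + RD ^ 2) * (a * eps * (eps + 2 * s + s * (- ln eps)) + a * eps * eps))
      by (unfold s; field; lra).
    apply Rmult_le_compat_l; [pose proof (pow2_ge_0 RD); lra|].
    assert (a * eps * (s * - ln s) <= a * eps * (s * - ln eps)); [|lra].
    apply Rmult_le_compat_l; [nra|]. apply Rmult_le_compat_l; lra.
Qed.

End RelayOutage.

Lemma P1_eq d RD eta tau P :
  P1 d RD eta tau P = outage_avg (1 + d ^ 2) (tau / P) eta RD.
Proof. reflexivity. Qed.

Lemma ln_lt_2_sqrt y : 0 < y -> ln y < 2 * sqrt y.
Proof.
  intros Hy. assert (Hs : 0 < sqrt y) by (apply sqrt_lt_R0, Hy).
  replace (ln y) with (2 * ln (sqrt y)).
  - pose proof (exp_ineq1_le (ln (sqrt y))). rewrite exp_ln in H by exact Hs. lra.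
  - rewrite <- (sqrt_sqrt y) at 2 by lra. rewrite ln_mult by exact Hs. ring.
Qed.

Lemma ln_div_sqr c P : 0 < c -> 0 < P -> ln (c / P ^ 2) = ln c - 2 * ln P.
Proof.
  intros Hc HP. unfold Rdiv. rewrite ln_mult, ln_Rinv, ln_pow by (try apply Rinv_0_lt_compat;
    apply pow_lt || lra; lra).
  simpl. ring.
Qed.

Lemma ln_lt_half_mul e L : 0 < e -> 16 / (e * e) < L -> ln L < e * L / 2.
Proof.
  intros He HL.
  assert (HL0 : 0 < L) by (eapply Rle_lt_trans; [|exact HL]; apply Rlt_le, Rdiv_lt_0_compat; nra).
  assert (Hsq : 4 / e < sqrt L).
  { apply Rsqr_incrst_0; [| apply Rlt_le, Rdiv_lt_0_compat | apply sqrt_pos]; try lra.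
    rewrite Rsqr_sqrt by lra. unfold Rsqr.
    replace (4 / e * (4 / e)) with (16 / (e * e)) by (field; lra). exact HL. }
  pose proof (ln_lt_2_sqrt L HL0).
  assert (sqrt L * sqrt L = L) by (apply sqrt_sqrt; lra).
  apply Rmult_lt_compat_l with (r := e) in Hsq; [|lra].
  replace (e * (4 / e)) with 4 in Hsq by (field; lra).
  pose proof (sqrt_pos L). nra.
Qed.

(** The [ln P] factor of the upper bound only contributes [ln ln P], negligible against [ln P]. *)
Lemma log_ratio_minus_two c C e : 0 < c -> 0 < C -> 0 < e ->
  exists M, forall P Q, M < P -> c / P ^ 2 <= Q <= C * ln P / P ^ 2 ->
    Rabs (- (ln Q / ln P) - 2) < e.
Proof.
  intros Hc HC He.
  set (K := Rabs (ln c) + Rabs (ln C)).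
  set (L0 := Rmax 1 (Rmax (16 / (e * e)) (2 * K / e))).
  exists (exp L0). intros P Q HP [Hlo Hhi].
  assert (HL0 : 1 <= L0 /\ 16 / (e * e) <= L0 /\ 2 * K / e <= L0).
  { unfold L0. repeat split; [apply Rmax_l | |];
      eapply Rle_trans; [| apply Rmax_r | | apply Rmax_r]; [apply Rmax_l | apply Rmax_r]. }
  assert (HP0 : 0 < P) by (pose proof (exp_pos L0); lra).
  set (L := ln P).
  assert (HL : L0 < L)
    by (unfold L; rewrite <- (ln_exp L0); apply ln_increasing; [apply exp_pos | exact HP]).
  assert (HQ : 0 < Q)
    by (eapply Rlt_le_trans; [|exact Hlo]; apply Rdiv_lt_0_compat; [lra | apply pow_lt; lra]).
  assert (Hlnlo : ln c - 2 * L <= ln Q).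
  { unfold L. rewrite <- ln_div_sqr by lra. apply ln_le; [|exact Hlo].
    apply Rdiv_lt_0_compat; [lra | apply pow_lt; lra]. }
  assert (Hlnhi : ln Q <= ln C + ln L - 2 * L).
  { assert (HCL : 0 < C * L) by (apply Rmult_lt_0_compat; lra).
    unfold L in *. rewrite <- ln_mult, <- ln_div_sqr by lra.
    apply ln_le; [exact HQ | exact Hhi]. }
  assert (HlnL : 0 <= ln L) by (rewrite <- ln_1; apply ln_le; lra).
  assert (HlnL' : ln L < e * L / 2) by (apply ln_lt_half_mul; lra).
  assert (HK : K < e * L / 2).
  { apply Rmult_lt_reg_r with (2 / e); [apply Rdiv_lt_0_compat; lra|].
    replace (e * L / 2 * (2 / e)) with L by (field; lra).
    replace (K * (2 / e)) with (2 * K / e) by (field; lra). lra. }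
  assert (Habs : Rabs (ln Q + 2 * L) < e * L).
  { pose proof (Rle_abs (- ln c)) as Hc'. rewrite Rabs_Ropp in Hc'.
    pose proof (Rle_abs (ln C)). pose proof (Rabs_pos (ln c)). pose proof (Rabs_pos (ln C)).
    unfold K in HK. apply Rabs_def1; lra. }
  replace (- (ln Q / L) - 2) with (- ((ln Q + 2 * L) / L)) by (field; lra).
  rewrite Rabs_Ropp, Rabs_div, (Rabs_right L) by lra.
  apply Rmult_lt_reg_r with L; [lra|]. unfold Rdiv. rewrite Rmult_assoc, Rinv_l, Rmult_1_r by lra.
  exact Habs.
Qed.

Lemma affine_le_mul K1 K2 t L : 0 <= K1 -> 0 <= K2 -> 1 <= L ->
  K1 + K2 * (L - t) <= (K1 + K2 * (Rabs t + 1)) * L.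
Proof.
  intros HK1 HK2 HL. pose proof (Rle_abs (- t)) as Ht. rewrite Rabs_Ropp in Ht.
  pose proof (Rabs_pos t).
  assert (0 <= (K1 + K2 * Rabs t) * (L - 1)) by (apply Rmult_le_pos; nra).
  nra.
Qed.

Lemma P1_bounds_at d RD eta tau P : 0 < RD -> 0 < eta -> eta <= 1 -> 0 < tau ->
  tau * (1 + d ^ 2) / eta < P ->
  (1 + d ^ 2) * tau ^ 2 / 4 / P ^ 2 <= P1 d RD eta tau P <=
  tau ^ 2 / P ^ 2 * ((1 + RD ^ 2) * (1 + d ^ 2) * (2 + 2 * (1 + d ^ 2) / eta)
                     + (1 + RD ^ 2) * (1 + d ^ 2) * (1 + d ^ 2) / eta * (ln P - ln tau)).
Proof.
  intros HRD Heta0 Heta1 Htau HP.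
  set (a := 1 + d ^ 2) in *.
  assert (Ha : 1 <= a) by (unfold a; pose proof (pow2_ge_0 d); lra).
  assert (HP0 : 0 < P) by (eapply Rlt_trans; [|exact HP]; apply Rdiv_lt_0_compat; nra).
  set (eps := tau / P).
  assert (Heps : 0 < eps) by (apply Rdiv_lt_0_compat; lra).
  assert (Hs : a * eps / eta <= 1).
  { replace (a * eps / eta) with (tau * a / eta * / P) by (unfold eps; field; lra).
    apply Rmult_le_reg_r with P; [lra|].
    rewrite Rmult_assoc, Rinv_l, Rmult_1_r, Rmult_1_l by lra. lra. }
  assert (Hlneps : - ln eps = ln P - ln tau).
  { unfold eps, Rdiv. rewrite ln_mult, ln_Rinv by (try apply Rinv_0_lt_compat; lra). ring. }
  assert (Heps2 : eps * eps = tau ^ 2 / P ^ 2) by (unfold eps; field; lra).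
  rewrite P1_eq. fold a eps.
  destruct (outage_avg_bounds a eps eta ltac:(lra) Heps Heta0 RD HRD Ha Heta1 Hs) as [Hlo Hhi].
  rewrite Hlneps, Heps2 in Hhi. split; [|exact Hhi].
  replace (a * tau ^ 2 / 4 / P ^ 2) with (a * eps * eps / 4)
    by (rewrite Rmult_assoc, Heps2; field; lra).
  exact Hlo.
Qed.

Lemma P1_bounds d RD eta tau : 0 < RD -> 0 < eta -> eta <= 1 -> 0 < tau ->
  exists c C M0, 0 < c /\ 0 < C /\ forall P, M0 < P ->
    c / P ^ 2 <= P1 d RD eta tau P <= C * ln P / P ^ 2.
Proof.
  intros HRD Heta0 Heta1 Htau.
  set (a := 1 + d ^ 2).
  assert (Ha : 1 <= a) by (unfold a; pose proof (pow2_ge_0 d); lra).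
  assert (HRD2 : 1 <= 1 + RD ^ 2) by (pose proof (pow2_ge_0 RD); lra).
  set (K1 := (1 + RD ^ 2) * a * (2 + 2 * a / eta)).
  set (K2 := (1 + RD ^ 2) * a * a / eta).
  assert (HK1 : 0 < K1)
    by (unfold K1; apply Rmult_lt_0_compat; [nra | assert (0 < a / eta) by
          (apply Rdiv_lt_0_compat; lra); lra]).
  assert (HK2 : 0 < K2) by (unfold K2; apply Rdiv_lt_0_compat; [nra | lra]).
  set (K := K1 + K2 * (Rabs (ln tau) + 1)).
  assert (HK : 0 < K) by (unfold K; pose proof (Rabs_pos (ln tau)); nra).
  exists (a * tau ^ 2 / 4), (tau ^ 2 * K), (Rmax (exp 1) (tau * a / eta)).
  split; [apply Rdiv_lt_0_compat; [apply Rmult_lt_0_compat; [lra | apply pow_lt]|]; lra|].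
  split; [apply Rmult_lt_0_compat; [apply pow_lt|]; lra|].
  intros P HP.
  assert (HPe : exp 1 < P) by (eapply Rle_lt_trans; [apply Rmax_l | exact HP]).
  assert (HPa : tau * a / eta < P) by (eapply Rle_lt_trans; [apply Rmax_r | exact HP]).
  assert (HP0 : 0 < P) by (pose proof (exp_pos 1); lra).
  assert (HL : 1 < ln P)
    by (rewrite <- (ln_exp 1); apply ln_increasing; [apply exp_pos | exact HPe]).
  destruct (P1_bounds_at d RD eta tau P HRD Heta0 Heta1 Htau HPa) as [Hlo Hhi].
  fold a K1 K2 in Hlo, Hhi. split; [exact Hlo|].
  eapply Rle_trans; [exact Hhi|].
  replace (tau ^ 2 * K * ln P / P ^ 2) with (tau ^ 2 / P ^ 2 * (K * ln P)) by (field; lra).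
  apply Rmult_le_compat_l; [apply Rdiv_le_0_compat; [apply pow_le | apply pow_lt]; lra|].
  apply affine_le_mul; lra.
Qed.

Theorem corollary1 (d RD eta Rt : R) (hd : 0 < d) (hRD : 0 < RD)
  (heta0 : 0 < eta) (heta1 : eta <= 1) (hRt : 0 < Rt) :
  let tau := Rpower 2 (2 * Rt) - 1 in
  forall e, 0 < e -> exists M, forall P, M < P ->
    Rabs (- (ln (P1 d RD eta tau P) / ln P) - 2) < e.
Proof.
  intros tau e He.
  assert (Htau : 0 < tau).
  { unfold tau. assert (Hpow : Rpower 2 0 < Rpower 2 (2 * Rt)) by (apply Rpower_lt; lra).
    rewrite Rpower_O in Hpow by lra. lra. }
  destruct (P1_bounds d RD eta tau hRD heta0 heta1 Htau) as [c [C [M0 [Hc [HC Hbounds]]]]].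
  destruct (log_ratio_minus_two c C e Hc HC He) as [M1 Hlim].
  exists (Rmax M0 M1). intros P HP.
  apply Hlim; [eapply Rle_lt_trans; [apply Rmax_r | exact HP]|].
  apply Hbounds. eapply Rle_lt_trans; [apply Rmax_l | exact HP].
Qed.
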